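(* Suppose the queries are chosen by GP-TS-SDF, i.e., $x_t\in\arg\max_{x\in\mathcal{Q}}f_t(x)$ where $f_t\sim\mathcal{GP}(\mu_{t-1}(\cdot),\nu_t^2\sigma^2_{t-1}(\cdot))$ given $\mathcal{F}_{t-1}$. For any filtration $\mathcal{F}_{t-1}$, conditioned on the event $E^f(t)$, $$\mathbb{P}\left(x_t\in\mathcal{Q}\setminus S_t\mid\mathcal{F}_{t-1}\right)\ge p-1/t^2,\qquad p=\frac{1}{4e\sqrt{\pi}}.$$
   Context: Setting. Let $\mathcal{Q}\subset\mathbb{R}^n$ be finite, $k$ a positive semidefinite kernel on $\mathcal{Q}$ with $k\le1$, and $f$ in the RKHS of $k$ with $\|f\|_k\le\mathcal{B}_f$; $x^\star\in\arg\max_{x\in\mathcal{Q}}f(x)$ and $\Delta(x)=f(x^\star)-f(x)$. Queries $x_1,x_2,\ldots$ are selected sequentially; feedback $y_t=f(x_t)+\epsilon_t$ with $R$-sub-Gaussian $\epsilon_t$ and $|y_t|\le\mathcal{B}_y$, observed after a random delay $d_t\in\{0,1,\ldots\}$ drawn from $\mathcal{D}$. For an integer $m\ge1$, $\rho_m=\mathbb{P}(d_s\le m)$, censored feedback $\tilde y_{s,t}=y_s\mathbb{1}\{d_s\le\min(m,t-s)\}$. With $\lambda>0$: $\mu_{t-1}(x)=\mathbf{k}_{t-1}(x)^\top(\mathbf{K}_{t-1}+\lambda I)^{-1}\tilde{\mathbf{y}}_{t-1}$, $\sigma^2_{t-1}(x,x')=k(x,x')-\mathbf{k}_{t-1}(x)^\top(\mathbf{K}_{t-1}+\lambda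 I)^{-1}\mathbf{k}_{t-1}(x')$, $\sigma^2_{t-1}(x)=\sigma^2_{t-1}(x,x)$, $\mathbf{k}_{t-1}(x)=(k(x,x_i))_{i\le t-1}$, $\mathbf{K}_{t-1}=(k(x_i,x_j))_{i,j\le t-1}$, $\tilde{\mathbf{y}}_{t-1}=(\tilde y_{s,t})_{s\le t-1}$. $\gamma_t=\max_A\frac12\log\det(I+\lambda^{-1}\mathbf{K}_A)$ over collections of $t$ points. For $\delta\in(0,1)$: $\beta_t=\mathcal{B}_f+(R+\mathcal{B}_y)\sqrt{2(\gamma_{t-1}+1+\log(4/\delta))}$, $\nu_t=\mathcal{B}_y\sum_{s=t-m}^{t-1}\sigma_{t-1}(x_s)+\beta_t$ (terms with $s<1$ omitted), $c_t=\nu_t(1+\sqrt{2\log(|\mathcal{Q}|t^2)})$. $\mathcal{F}_{t-1}$: history up to iteration $t-1$. $E^f(t)$: the event that $|\mu_{t-1}(x)-\rho_mf(x)|\le\nu_t\sigma_{t-1}(x)$ for all $x\in\mathcal{Q}$. Saturated set: $S_t=\{x\in\mathcal{Q}:\rho_m\Delta(x)>c_t\sigma_{t-1}(x)\}$. *)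

From HB Require Import structures.
From mathcomp Require Import all_boot all_order all_algebra.
From mathcomp Require Import all_classical all_reals all_analysis.
From mathcomp Require Import normal_distribution.
Set Implicit Arguments. Unset Strict Implicit. Unset Printing Implicit Defensive.
Import Order.TTheory GRing.Theory Num.Theory numFieldTopology.Exports.
Local Open Scope classical_set_scope.
Local Open Scope ring_scope.

Definition kernel_psd (R : realType) (Q : finType) (k : Q -> Q -> R) : Prop :=
  (forall x x', k x x' = k x' x) /\
  (forall a : Q -> R, 0 <= \sum_(x : Q) \sum_(y : Q) a x * a y * k x y).

(* f belongs to the RKHS of k with ||f||_k <= B.  On a finite set the RKHS is
   span{k(.,y)} and the norm of f = sum_y a_y k(.,y) is sqrt(a^T K a)
   (independent of the representation a). *)
Definition in_rkhs_ball (R : realType) (Q : finType) (k : Q -> Q -> R)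
    (f : Q -> R) (B : R) : Prop :=
  0 <= B /\
  exists a : Q -> R, (forall x, f x = \sum_(y : Q) a y * k x y) /\
    \sum_(x : Q) \sum_(y : Q) a x * a y * k x y <= B ^+ 2.

(* queries are x_1, x_2, ...; row i : 'I_(t-1) corresponds to s = i+1 *)

Definition Kmat (R : realType) (Q : finType) (k : Q -> Q -> R) (xs : nat -> Q)
    (N : nat) : 'M[R]_N :=
  \matrix_(i < N, j < N) k (xs i.+1) (xs j.+1).

Definition kvec (R : realType) (Q : finType) (k : Q -> Q -> R) (xs : nat -> Q)
    (N : nat) (x : Q) : 'cV[R]_N :=
  \col_(i < N) k (xs i.+1) x.

(* censored feedback vector (y~_{s,t})_{s <= t-1},
   y~_{s,t} = y_s 1{d_s <= min(m, t-s)} *)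
Definition ytil (R : realType) (ys : nat -> R) (ds : nat -> nat) (m t : nat)
    : 'cV[R]_(t.-1) :=
  \col_(i < t.-1) (if (ds i.+1 <= minn m (t - i.+1))%N then ys i.+1 else 0).

Definition post_mean (R : realType) (Q : finType) (k : Q -> Q -> R) (lam : R)
    (xs : nat -> Q) (ys : nat -> R) (ds : nat -> nat) (m t : nat) (x : Q) : R :=
  ((kvec k xs t.-1 x)^T *m invmx (Kmat k xs t.-1 + lam%:M) *m ytil ys ds m t)
    ord0 ord0.

Definition post_cov (R : realType) (Q : finType) (k : Q -> Q -> R) (lam : R)
    (xs : nat -> Q) (t : nat) (x x' : Q) : R :=
  k x x' - ((kvec k xs t.-1 x)^T *m invmx (Kmat k xs t.-1 + lam%:M)
              *m kvec k xs t.-1 x') ord0 ord0.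

Definition post_sd (R : realType) (Q : finType) (k : Q -> Q -> R) (lam : R)
    (xs : nat -> Q) (t : nat) (x : Q) : R :=
  Num.sqrt (post_cov k lam xs t x x).

Definition info_gain (R : realType) (Q : finType) (k : Q -> Q -> R) (lam : R)
    (N : nat) : R :=
  \big[Num.max/0]_(A : {ffun 'I_N -> Q})
     (ln (\det (1%:M + lam^-1 *: \matrix_(i < N, j < N) k (A i) (A j))) / 2).

Definition beta_t (R : realType) (Q : finType) (k : Q -> Q -> R) (lam : R)
    (Bf Rn By delta : R) (t : nat) : R :=
  Bf + (Rn + By) *
       Num.sqrt (2 * (info_gain k lam t.-1 + 1 + ln (4 / delta))).

Definition nu_t (R : realType) (Q : finType) (k : Q -> Q -> R) (lam : R)
    (Bf Rn By delta : R) (xs : nat -> Q) (m t : nat) : R :=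
  By * (\sum_(t - m <= s < t | (0 < s)%N) post_sd k lam xs t (xs s))
  + beta_t k lam Bf Rn By delta t.

Definition c_t (R : realType) (Q : finType) (k : Q -> Q -> R) (lam : R)
    (Bf Rn By delta : R) (xs : nat -> Q) (m t : nat) : R :=
  nu_t k lam Bf Rn By delta xs m t *
  (1 + Num.sqrt (2 * ln (#|Q|%:R * (t%:R) ^+ 2))).

Definition is_pmf (R : realType) (D : nat -> R) : Prop :=
  (forall i, 0 <= D i) /\ series D n @[n --> \oo] --> (1 : R).

Definition rho (R : realType) (D : nat -> R) (m : nat) : R :=
  \sum_(i < m.+1) D i.

Definition Ef_event (R : realType) (Q : finType) (k : Q -> Q -> R) (lam : R)
    (Bf Rn By delta : R) (f : Q -> R) (D : nat -> R)
    (xs : nat -> Q) (ys : nat -> R) (ds : nat -> nat) (m t : nat) : Prop :=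
  forall x : Q, `|post_mean k lam xs ys ds m t x - rho D m * f x|
                <= nu_t k lam Bf Rn By delta xs m t * post_sd k lam xs t x.

Definition saturated (R : realType) (Q : finType) (k : Q -> Q -> R) (lam : R)
    (Bf Rn By delta : R) (f : Q -> R) (xstar : Q) (D : nat -> R)
    (xs : nat -> Q) (m t : nat) : set Q :=
  [set x | rho D m * (f xstar - f x)
           > c_t k lam Bf Rn By delta xs m t * post_sd k lam xs t x].

Definition normal_law (R : realType) (mean var : R) (A : set R) : \bar R :=
  if var == 0 then dirac mean A else normal_prob mean (Num.sqrt var) A.

Definition gaussian_field (R : realType) (Q : finType) (d : measure_display)
    (T : measurableType d) (P : probability T R) (g : Q -> T -> R)
    (mean : Q -> R) (cov : Q -> Q -> R) : Prop :=
  (forall x, measurable_fun setT (g x)) /\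
  forall (a : Q -> R) (A : set R), measurable A ->
    P ((fun w => \sum_(x : Q) a x * g x w) @^-1` A) =
    normal_law (\sum_(x : Q) a x * mean x)
               (\sum_(x : Q) \sum_(y : Q) a x * a y * cov x y) A.

Definition p_const (R : realType) : R := (4 * expR 1 * Num.sqrt pi)^-1.

(* On E^f(t), if the maximiser x_t of f_t were saturated while
   f_t(x* ) >= mu(x* ) + nu sigma(x* ), then
   f_t(x_t) >= f_t(x* ) >= rho f(x* ) > rho f(x_t) + c_t sigma(x_t)
            >= mu(x_t) + L nu sigma(x_t),   with L = sqrt (2 log (|Q| t^2)).
   So {f_t(x* ) >= mu(x* ) + nu sigma(x* )} is covered by {x_t unsaturated} and
   the |Q| events {f_t(x) > mu(x) + L nu sigma(x)}.  The first has Gaussian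
   probability at least p (one standard deviation above the mean), each of the
   others at most exp(-L^2/2) = 1/(|Q| t^2), and a union bound concludes. *)

From HB Require Import structures.
From mathcomp Require Import all_boot all_order all_algebra.
From mathcomp Require Import all_classical all_reals all_analysis.
From mathcomp Require Import normal_distribution measurable_realfun.
From mathcomp Require Import ring lra.
Set Implicit Arguments. Unset Strict Implicit. Unset Printing Implicit Defensive.
Import Order.TTheory GRing.Theory Num.Theory numFieldTopology.Exports.
Local Open Scope classical_set_scope.
Local Open Scope ring_scope.

Section normal_tails.
Variable R : realType.
Implicit Types m s L x : R.

Lemma normal_pdf_shift_le m s L x : 0 < s -> 0 <= L -> m + L * s <= x ->
  normal_pdf m s x <= expR (- L ^+ 2 / 2) * normal_pdf (m + L * s) s x.
Proof.
move=> s0 L0 hx; have sn0 : s != 0 by rewrite gt_eqF.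
rewrite !normal_pdfE // /normal_fun mulrCA -expRD ler_wpM2l ?normal_peak_ge0 //.
rewrite ler_expR -subr_ge0.
have -> : - L ^+ 2 / 2 + - (x - (m + L * s)) ^+ 2 / (s ^+ 2 *+ 2)
    - - (x - m) ^+ 2 / (s ^+ 2 *+ 2) = L * (x - (m + L * s)) / s by field.
by rewrite !mulr_ge0 ?invr_ge0 ?subr_ge0 // ltW.
Qed.

Lemma normal_prob_tail_le m s L : 0 < s -> 0 <= L ->
  (normal_prob m s `](m + L * s)%R, +oo[%classic <= (expR (- L ^+ 2 / 2))%:E)%E.
Proof.
move=> s0 L0; set c := expR (- L ^+ 2 / 2).
apply: (@le_trans _ _ (\int[lebesgue_measure]_(x in `](m + L * s)%R, +oo[%classic)
    (c%:E * (normal_pdf (m + L * s) s x)%:E))%E).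
  apply: ge0_le_integral => //.
  - by move=> x _; rewrite lee_fin normal_pdf_ge0.
  - by apply/measurable_EFinP/measurable_funTS; exact: measurable_normal_pdf.
  - apply/measurable_EFinP/measurable_funTS/measurable_funM => //.
    exact: measurable_normal_pdf.
  move=> x; rewrite /= in_itv /= andbT => hx.
  by rewrite -EFinM lee_fin normal_pdf_shift_le // ltW.
rewrite ge0_integralZl //; last 3 first.
- by apply/measurable_EFinP/measurable_funTS; exact: measurable_normal_pdf.
- by move=> x _; rewrite lee_fin normal_pdf_ge0.
- by rewrite lee_fin expR_ge0.
rewrite -[leRHS]mule1 lee_wpmul2l ?lee_fin ?expR_ge0 //.
exact: (probability_le1 (normal_prob (m + L * s) s)).
Qed.

Lemma normal_pdf_ge_within m s a x : s != 0 -> `|x - m| <= a ->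
  normal_peak s * expR (- a ^+ 2 / (s ^+ 2 *+ 2)) <= normal_pdf m s x.
Proof.
move=> sn0 hx; rewrite normal_pdfE // ler_wpM2l ?normal_peak_ge0 // ler_expR.
rewrite !mulNr lerN2 ler_wpM2r ?invr_ge0 ?mulrn_wge0 ?sqr_ge0 //.
by rewrite -real_normK ?num_real // lerXn2r ?nnegrE ?(le_trans _ hx).
Qed.

Lemma p_const_le_normal_peak s : 0 < s ->
  p_const R <= normal_peak s * expR (- (3 / 2) ^+ 2 / 2) * (s / 2).
Proof.
move=> s0; rewrite /p_const /normal_peak.
have pi0 : 0 < Num.sqrt (pi : R) by rewrite sqrtr_gt0 pi_gt0.
have sqrt2_gt0 : 0 < Num.sqrt (2 : R) by rewrite sqrtr_gt0; lra.
have sqrt2_le : Num.sqrt (2 : R) <= 3 / 2.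
  by have := sqr_sqrtr (ler0n R 2); nra.
have e18 : 7 / 8 <= expR (- (1 / 8) : R) by apply: le_trans (expR_ge1Dx _); lra.
have -> : Num.sqrt (s ^+ 2 * pi *+ 2) = s * (Num.sqrt pi * Num.sqrt 2).
  rewrite -mulr_natr -mulrA sqrtrM ?sqr_ge0 // sqrtr_sqr ger0_norm ?ltW //.
  by rewrite sqrtrM ?pi_ge0.
have -> : expR (- (3 / 2) ^+ 2 / 2 : R) = (expR 1)^-1 * expR (- (1 / 8)).
  by rewrite -expRN -expRD; congr expR; lra.
have -> : (s * (Num.sqrt pi * Num.sqrt 2))^-1 * ((expR 1)^-1 * expR (- (1 / 8)))
    * (s / 2) = (4 * expR 1 * Num.sqrt pi)^-1 * (2 * expR (- (1 / 8)) / Num.sqrt 2).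
  by field; rewrite ?gt_eqF ?expR_gt0.
rewrite -[leLHS]mulr1; apply: ler_wpM2l; first by rewrite invr_ge0 !mulr_ge0 ?expR_ge0 ?ltW.
by rewrite ler_pdivlMr //; lra.
Qed.

(* The density is at least its value at m + 3s/2 on [m + s, m + 3s/2], a
   window of mass at least e^(-9/8) / (2 sqrt (2 pi)) >= p. *)
Lemma normal_prob_one_sd_ge m s : 0 < s ->
  ((p_const R)%:E <= normal_prob m s `[(m + s)%R, +oo[%classic)%E.
Proof.
move=> s0; have sn0 : s != 0 by rewrite gt_eqF.
set a := s * (3 / 2); set c := normal_peak s * expR (- (3 / 2) ^+ 2 / 2).
have ca : c = normal_peak s * expR (- a ^+ 2 / (s ^+ 2 *+ 2)).
  by rewrite /c /a; congr (_ * expR _); field.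
apply: (@le_trans _ _ (normal_prob m s `[(m + s)%R, (m + a)%R]%classic)); last first.
  by apply: le_measure; rewrite ?inE //= => x; rewrite /= !in_itv /= => /andP[->].
apply: (@le_trans _ _ (\int[lebesgue_measure]_(x in `[(m + s)%R, (m + a)%R]%classic)
    (cst c%:E) x)%E).
  rewrite integral_cst //= lebesgue_measure_itv /= lte_fin ltrD2l ifT; last first.
    by rewrite /a ltr_pMr //; lra.
  rewrite -EFinD -EFinM lee_fin (_ : m + a - (m + s) = s / 2); last first.
    by rewrite /a; field.
  exact: p_const_le_normal_peak.
apply: ge0_le_integral => //.
- by move=> x _; rewrite lee_fin /c mulr_ge0 ?normal_peak_ge0 ?expR_ge0.
- by apply/measurable_EFinP/measurable_funTS; exact: measurable_normal_pdf.
move=> x; rewrite /= in_itv /= => /andP[h1 h2].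
rewrite lee_fin ca normal_pdf_ge_within // ger0_norm; rewrite /a in h2 *; lra.
Qed.

End normal_tails.

Section normal_law_bounds.
Variable R : realType.
Implicit Types m v L : R.

Lemma normal_law_one_sd_ge m v : 0 <= v ->
  ((p_const R)%:E <= normal_law m v `[(m + Num.sqrt v)%R, +oo[%classic)%E.
Proof.
rewrite le_eqVlt /normal_law => /orP[/eqP<-|v0]; last first.
  by rewrite gt_eqF //; apply: normal_prob_one_sd_ge; rewrite sqrtr_gt0.
rewrite eqxx diracE sqrtr0 addr0 mem_set /= ?in_itv /= ?lexx // lee_fin.
have e2 : 2 <= expR (1 : R) by have := expR_ge1Dx (1 : R); lra.
have sqrt_pi_ge1 : 1 <= Num.sqrt (pi : R).
  by rewrite -sqrtr1 ler_sqrt ?pi_ge0 //; have := @pi_ge2 R; lra.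
rewrite /p_const invf_le1; last by rewrite !mulr_gt0 //; lra.
nra.
Qed.

Lemma normal_law_tail_le m v L : 0 <= v -> 0 <= L ->
  (normal_law m v `](m + L * Num.sqrt v)%R, +oo[%classic
    <= (expR (- L ^+ 2 / 2))%:E)%E.
Proof.
rewrite le_eqVlt /normal_law => /orP[/eqP<-|v0] L0; last first.
  by rewrite gt_eqF //; apply: normal_prob_tail_le; rewrite ?sqrtr_gt0.
rewrite eqxx diracE sqrtr0 mulr0 addr0 memNset ?lee_fin ?expR_ge0 //=.
by rewrite in_itv /= ltxx.
Qed.

End normal_law_bounds.

Section gaussian_field_laws.
Variables (R : realType) (Q : finType) (d : measure_display) (T : measurableType d).
Variables (P : probability T R) (g : Q -> T -> R) (mean : Q -> R) (cov : Q -> Q -> R).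
Hypothesis gf : gaussian_field P g mean cov.

Lemma gaussian_field_scale x c (A : set R) : measurable A ->
  P ((fun w => c * g x w) @^-1` A) = normal_law (c * mean x) (c * c * cov x x) A.
Proof.
move=> mA; pose a y : R := if y == x then c else 0.
have sum_a (F : Q -> R) : \sum_y a y * F y = c * F x.
  by rewrite (bigD1 x) //= /a eqxx big1 ?addr0 // => y /negbTE ->; rewrite mul0r.
have var_a : \sum_z \sum_y a z * a y * cov z y = c * c * cov x x.
  transitivity (\sum_z a z * (c * cov z x)); last by rewrite sum_a mulrA.
  apply: eq_bigr => z _; rewrite -(sum_a (cov z)) mulr_sumr.
  by apply: eq_bigr => y _; rewrite mulrA.
have -> : (fun w => c * g x w) = (fun w => \sum_y a y * g y w).
  by apply/funext => w; rewrite sum_a.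
by rewrite (gf.2 _ _ mA) sum_a var_a.
Qed.

Lemma gaussian_field_marginal x (A : set R) : measurable A ->
  P (g x @^-1` A) = normal_law (mean x) (cov x x) A.
Proof.
move=> mA; have := gaussian_field_scale x 1 mA; rewrite !mul1r.
by under [X in P X]eq_fun do rewrite mul1r.
Qed.

(* For a negative variance v, [Num.sqrt v = 0] turns [normal_law m v] into the
   junk law of [normal_pdf m 0], the uniform law on [0, 1], whatever m and v;
   g x and 2 g x cannot both have that law. *)
Lemma gaussian_field_var_ge0 x : 0 <= cov x x.
Proof.
rewrite leNgt; apply/negP => cov_lt0.
have uniform c (A : set R) : measurable A -> 0 < c ->
    P ((fun w => c * g x w) @^-1` A) = lebesgue_measure (`[0%R, 1%R] `&` A).
  move=> mA c0; rewrite gaussian_field_scale // /normal_law.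
  have var_lt0 : c * c * cov x x < 0 by rewrite pmulr_rlt0 // mulr_gt0.
  rewrite ifF ?lt_eqF // ler0_sqrtr ?ltW // /normal_prob /normal_pdf eqxx.
  exact: integral_indic.
have := uniform 1 `[0%R, (1 / 2)%R]%classic (measurable_itv _) ltr01.
rewrite (_ : _ @^-1` _ = (fun w => 2 * g x w) @^-1` `[0%R, 1%R]%classic); last first.
  by apply/seteqP; split => w /=; rewrite !in_itv /= mul1r => /andP[? ?];
    apply/andP; split; lra.
rewrite uniform ?ltr0n // setIid (setIidr (_ : `[0%R, (1 / 2)%R]%classic `<=` _)).
  rewrite !lebesgue_measure_itv /= !lte_fin ltr01 ifT -?EFinD; last lra.
  by move=> []; lra.
by move=> y /=; rewrite !in_itv /= => /andP[-> ?]; lra.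
Qed.

Lemma measurable_gaussian_field_preimage x (Y : set R) :
  measurable Y -> measurable (g x @^-1` Y).
Proof. by move=> mY; rewrite -[_ @^-1` _]setTI; exact: gf.1. Qed.

End gaussian_field_laws.

Section finite_cover.
Variables (R : realType) (Q : finType) (d : measure_display) (T : measurableType d).
Variable P : probability T R.

Lemma probability_fin_bigcup_le (B : Q -> set T) (b : R) :
  (forall x, measurable (B x)) -> (forall x, (P (B x) <= b%:E)%E) ->
  (P (\bigcup_x B x) <= (#|Q|%:R * b)%:E)%E.
Proof.
move=> mB PB; have mU : measurable (\bigcup_x B x).
  exact: fin_bigcup_measurable finite_finset (fun x _ => mB x).
apply: le_trans (@content_sub_fsum _ _ _ P Q [set: Q] _ B finite_finset
  (fun x _ => mB x) mU (@subset_refl _ _)) _.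
rewrite (fsbigE (index_enum Q)) ?index_enum_uniq //; last first.
  by move=> x _; rewrite mem_index_enum.
under eq_bigl do rewrite in_setT.
apply: (@le_trans _ _ (\sum_(x : Q) b%:E)%E); first by apply: lee_sum => x _; exact: PB.
by rewrite sumEFin sumr_const mulr_natl.
Qed.

Lemma probability_cover_ge (A N : set T) (B : Q -> set T) (a b : R) :
  measurable A -> measurable N -> (forall x, measurable (B x)) ->
  A `<=` N `|` \bigcup_x B x ->
  (a%:E <= P A)%E -> (forall x, (P (B x) <= b%:E)%E) ->
  ((a - #|Q|%:R * b)%:E <= P N)%E.
Proof.
move=> mA mN mB AsubNB PA PB.
have mU : measurable (\bigcup_x B x).
  exact: fin_bigcup_measurable finite_finset (fun x _ => mB x).
have PA_le : (a%:E <= P N + (#|Q|%:R * b)%:E)%E.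
  apply: le_trans PA (le_trans (le_measure _ _ _ AsubNB) _); rewrite ?inE //.
  - exact: measurableU.
  - apply: le_trans (measureU2 _ mN mU) (leeD (lexx _) _).
    exact: probability_fin_bigcup_le.
rewrite -[P N]fineK ?fin_num_measure // -EFinD lee_fin in PA_le.
by rewrite -[P N]fineK ?fin_num_measure // lee_fin lerBlDr.
Qed.

End finite_cover.

Lemma measurable_fin_preimage (d : measure_display) (T : measurableType d)
    (Q : finType) (h : T -> Q) (S : set Q) :
  (forall q, measurable [set w | h w = q]) -> measurable (h @^-1` S).
Proof.
move=> mh; have -> : h @^-1` S = \bigcup_(q in S) [set w | h w = q].
  by apply/seteqP; split => [w Sw | w [q Sq /= hq]]; [exists (h w) | rewrite /= hq].
by apply: fin_bigcup_measurable => // q _; exact: mh.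
Qed.

Section thompson_sampling.
Variables (R : realType) (Q : finType).

Lemma argmax_saturated_gt (mu g f sd : Q -> R) (rho nu L : R) (xs x : Q) :
  `|mu xs - rho * f xs| <= nu * sd xs -> `|mu x - rho * f x| <= nu * sd x ->
  nu * (1 + L) * sd x < rho * (f xs - f x) -> g xs <= g x ->
  mu xs + nu * sd xs <= g xs -> mu x + L * (nu * sd x) < g x.
Proof. by rewrite !ler_norml => /andP[? _] /andP[_ ?] ? ? ?; lra. Qed.

Lemma expR_sqrt2ln (a : R) : 1 <= a -> expR (- Num.sqrt (2 * ln a) ^+ 2 / 2) = a^-1.
Proof.
move=> a1; rewrite sqr_sqrtr ?mulr_ge0 ?ln_ge0 // mulNr mulrC mulKf //.
by rewrite expRN lnK // posrE; lra.
Qed.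

Lemma nu_t_ge0 (k : Q -> Q -> R) (lam Bf Rn By delta : R) (xs : nat -> Q) (m t : nat) :
  0 <= Bf -> 0 <= Rn -> 0 <= By -> 0 <= nu_t k lam Bf Rn By delta xs m t.
Proof.
move=> Bf0 Rn0 By0; rewrite /nu_t /beta_t !addr_ge0 ?mulr_ge0 ?addr_ge0 ?sqrtr_ge0 //.
by apply: sumr_ge0 => s _; exact: sqrtr_ge0.
Qed.

End thompson_sampling.

Unset Implicit Arguments.

Theorem lemma4 (R : realType) (Q : finType) (k : Q -> Q -> R) (f : Q -> R)
    (xstar : Q) (Bf Rn By lam delta : R) (D : nat -> R) (m t : nat)
    (xs : nat -> Q) (ys : nat -> R) (ds : nat -> nat)
    (d : measure_display) (T : measurableType d) (P : probability T R)
    (ft : Q -> T -> R) (xt : T -> Q) :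
  kernel_psd k ->
  (forall x x', k x x' <= 1) ->
  in_rkhs_ball k f Bf ->
  (forall x, f x <= f xstar) ->
  0 <= Rn -> 0 <= By ->
  (forall s, (1 <= s < t)%N -> `|ys s| <= By) ->
  is_pmf D -> (1 <= m)%N ->
  0 < lam -> 0 < delta < 1 ->
  (1 <= t)%N ->
  (* conditioning on the event E^f(t) *)
  Ef_event k lam Bf Rn By delta f D xs ys ds m t ->
  (* given F_{t-1}: f_t ~ GP(mu_{t-1}, nu_t^2 sigma^2_{t-1}) *)
  gaussian_field P ft (post_mean k lam xs ys ds m t)
    (fun x x' => nu_t k lam Bf Rn By delta xs m t ^+ 2 * post_cov k lam xs t x x') ->
  (* x_t in argmax_x f_t(x), selected measurably *)
  (forall w y, ft y w <= ft (xt w) w) ->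
  (forall q : Q, measurable [set w | xt w = q]) ->
  ((p_const R - (t%:R ^+ 2)^-1)%:E
     <= P [set w | ~ saturated k lam Bf Rn By delta f xstar D xs m t (xt w)])%E.
Proof.
move=> _ _ [Bf0 _] _ Rn0 By0 _ _ _ _ _ t1 Ef gf argmax mxt.
set sat := saturated k lam Bf Rn By delta f xstar D xs m t.
set mu := post_mean k lam xs ys ds m t; set nu := nu_t k lam Bf Rn By delta xs m t.
pose L : R := Num.sqrt (2 * ln (#|Q|%:R * t%:R ^+ 2)).
pose v x := nu ^+ 2 * post_cov k lam xs t x x.
have v_ge0 x : 0 <= v x := gaussian_field_var_ge0 gf x.
have sqrt_v x : Num.sqrt (v x) = nu * post_sd k lam xs t x.
  by rewrite sqrtrM ?sqr_ge0 // sqrtr_sqr ger0_norm //; exact: nu_t_ge0.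
have mft := measurable_gaussian_field_preimage gf.
have Q_gt0 : (0 < #|Q|)%N by apply/card_gt0P; exists xstar.
have Qt1 : 1 <= #|Q|%:R * t%:R ^+ 2 :> R.
  by rewrite -natrX -natrM ler1n muln_gt0 expn_gt0 t1 Q_gt0.
rewrite (_ : t%:R ^- 2 = #|Q|%:R * (#|Q|%:R * t%:R ^+ 2)^-1); last first.
  by rewrite [in RHS]invfM mulVKf // pnatr_eq0 -lt0n.
apply: (probability_cover_ge (P := P)
  (mft xstar _ (measurable_itv `[(mu xstar + Num.sqrt (v xstar))%R, +oo[))
  (measurable_fin_preimage (~` sat) mxt)
  (fun x => mft x _ (measurable_itv `](mu x + L * Num.sqrt (v x))%R, +oo[))).
- move=> w /=; rewrite !in_itv /= !andbT !sqrt_v => ft_xstar.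
  have [sat_xt|] := pselect (sat (xt w)); last by left.
  right; exists (xt w) => //=; rewrite in_itv /= andbT sqrt_v.
  exact: (argmax_saturated_gt (g := ft^~ w) (Ef xstar) (Ef (xt w)) sat_xt
    (argmax w xstar) ft_xstar).
- rewrite /= (gaussian_field_marginal gf); last exact: measurable_itv.
  exact: normal_law_one_sd_ge (v_ge0 xstar).
- move=> x; rewrite /= (gaussian_field_marginal gf); last exact: measurable_itv.
  by rewrite -expR_sqrt2ln //; exact: normal_law_tail_le (v_ge0 x) (sqrtr_ge0 _).
Qed.
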